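(* Let $a>0$ and $0<V_{\min}<V_{\max}$, and let $Q=[0,a]^2$. A point enters $Q$ through the bottom side at $(X,0)$ and moves in a straight line at constant speed $V$ in direction making angle $\Phi$ with the bottom side (direction $(\cos\Phi,\sin\Phi)$), where $X\sim\mathrm{Uniform}[0,a]$, $\Phi\sim\mathrm{Uniform}(0,\pi)$, $V\sim\mathrm{Uniform}[V_{\min},V_{\max}]$ are independent. Let $T$ be the time until it leaves $Q$. Put $$K=\frac{1}{a\pi(V_{\max}-V_{\min})},$$ $$I_{aw}=\frac{Ka^2}{2}\log\!\left(\frac{V_{\max}}{V_{\min}}\right)\left[\log(\sqrt2+1)+(\sqrt2-1)\right],\qquad I_{ow}=2Ka^2\log\!\left(\frac{V_{\max}}{V_{\min}}\right)\left[\log(\sqrt2+1)+(1-\sqrt2)\right],$$ where $\log$ is the natural logarithm. Then for each of the two sides adjacent to the entry side, $\mathbb{E}[T\,\mathbf{1}\{\text{exit through that side}\}]=I_{aw}$; $\mathbb{E}[T\,\mathbf{1}\{\text{exit through the opposite side}\}]=I_{ow}$; and hence the expected contact time with one node stationary, $\overline{T^{s}_{con}}:=\mathbb{E}[T]$, satisfies $\overline{T^{s}_{con}}=2I_{aw}+I_{ow}$.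
   Context: Interpretation: nodes communicate iff they are in the same square cell of side $a$; when one node is stationary, the contact lasts from the moment the moving node enters the stationary node's cell until it leaves it. The moving node is assumed to traverse the cell along a single straight segment, with point of entry, angle of entry and speed uniformly distributed as stated (by symmetry, the entry side can be taken to be the bottom side). Exits through a corner have probability zero. *)

From Stdlib Require Import Reals.
Open Scope R_scope.

Definition RInt_val (f : R -> R) (lo hi l : R) : Prop :=
  exists pr : Riemann_integrable f lo hi, RiemannInt pr = l.

Definition iter_int3 (F : R -> R -> R -> R)
  (a1 b1 a2 b2 a3 b3 l : R) : Prop :=
  exists (G : R -> R) (H : R -> R -> R),
    (forall x, a1 <= x <= b1 -> forall y, a2 <= y <= b2 ->
        RInt_val (fun z => F x y z) a3 b3 (H x y)) /\
    (forall x, a1 <= x <= b1 -> RInt_val (fun y => H x y) a2 b2 (G x)) /\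
    RInt_val G a1 b1 l.

(** Geometry: the node enters Q = [0,a]^2 at (x,0), moves with speed v in
    direction (cos phi, sin phi), phi in (0,pi).  Times needed to reach the
    lines supporting the three other sides. *)
Definition t_top (a phi v : R) : R := a / (v * sin phi).
Definition t_right (a x phi v : R) : R := (a - x) / (v * cos phi).
Definition t_left (x phi v : R) : R := x / (v * - cos phi).

Definition ind_right (a x phi v : R) : R :=
  if Rlt_dec 0 (cos phi) then
    (if Rlt_dec (t_right a x phi v) (t_top a phi v) then 1 else 0)
  else 0.

Definition ind_left (a x phi v : R) : R :=
  if Rlt_dec (cos phi) 0 then
    (if Rlt_dec (t_left x phi v) (t_top a phi v) then 1 else 0)
  else 0.

(** Indicator of exit through the opposite (top) side (corners: prob. zero). *)
Definition ind_top (a x phi v : R) : R :=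
  1 - ind_right a x phi v - ind_left a x phi v.

Definition exit_time (a x phi v : R) : R :=
  ind_right a x phi v * t_right a x phi v
  + ind_left a x phi v * t_left x phi v
  + ind_top a x phi v * t_top a phi v.

(** Expectation of g(X,Phi,V) with X ~ U[0,a], Phi ~ U(0,pi),
    V ~ U[Vmin,Vmax] independent: joint density 1/(a pi (Vmax-Vmin)). *)
Definition expectation (a Vmin Vmax : R) (g : R -> R -> R -> R) (l : R) : Prop :=
  exists I, iter_int3 g 0 a 0 PI Vmin Vmax I /\
            l = I / (a * PI * (Vmax - Vmin)).

From Pilot Require Import Defs.
From Stdlib Require Import Reals Lra.
From Coquelicot Require Import Coquelicot.
Open Scope R_scope.

(* 1. Every exit time is (exit time at unit speed) / v and the exit side does
      not depend on v, so each expectation is ln (Vmax / Vmin) times an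
      integral over (x, phi), divided by a PI (Vmax - Vmin)
      ([expectation_inverse_speed]).
   2. For fixed x the exit side is decided by the directions of the two top
      corners: right below [corner_angle a (a - x)], left above
      PI - [corner_angle a x], opposite side in between.  The left case is the
      mirror image of the right one under x |-> a - x, phi |-> PI - phi.
   3. The angular integrals are integrals of the secant and the cosecant; they
      produce the kernels u ln ((r + a) / u) with u = a - x for an adjacent
      side ([adj_kernel]) and a (arsinh (x/a) + arsinh ((a-x)/a)) for the
      opposite side ([opp_kernel]).
   4. The kernels are integrated over x with explicit primitives; the adjacent
      one has a removable logarithmic singularity at u = 0.
   The expectation of the total exit time is the sum of the three, by
   linearity of the (iterated) integral. *)

Lemma RInt_val_of_is_RInt (f : R -> R) (lo hi l : R) :
  is_RInt f lo hi l -> Defs.RInt_val f lo hi l.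
Proof.
  intro H. assert (E : ex_RInt f lo hi) by (exists l; exact H).
  exists (ex_RInt_Reals_0 _ _ _ E). rewrite <- RInt_Reals. exact (is_RInt_unique _ _ _ _ H).
Qed.

Lemma is_RInt_of_RInt_val (f : R -> R) (lo hi l : R) :
  Defs.RInt_val f lo hi l -> is_RInt f lo hi l.
Proof.
  intros [pr <-]. rewrite <- (RInt_Reals f lo hi pr).
  exact (RInt_correct _ _ _ (ex_RInt_Reals_1 _ _ _ pr)).
Qed.

Lemma is_RInt_primitive (F f : R -> R) (lo hi : R) : lo <= hi ->
  (forall x, lo <= x <= hi -> is_derive F x (f x)) ->
  (forall x, lo <= x <= hi -> continuous f x) -> is_RInt f lo hi (F hi - F lo).
Proof.
  intros Hle Hd Hc. apply (is_RInt_derive F f); rewrite Rmin_left, Rmax_right by lra; assumption.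
Qed.

Lemma is_RInt_null (f : R -> R) (lo hi : R) : lo <= hi ->
  (forall x, lo < x < hi -> f x = 0) -> is_RInt f lo hi 0.
Proof.
  intros Hle H. apply (is_RInt_ext (fun _ => 0)).
  - rewrite Rmin_left, Rmax_right by lra. intros x Hx. now rewrite H.
  - assert (E : scal (hi - lo) (0 : R) = 0) by (unfold scal; simpl; unfold mult; simpl; ring).
    exact (eq_ind _ (is_RInt (fun _ => 0) lo hi) (is_RInt_const lo hi 0) 0 E).
Qed.

Lemma is_RInt_mult_const (f : R -> R) (lo hi l k : R) :
  is_RInt f lo hi l -> is_RInt (fun y => f y * k) lo hi (l * k).
Proof.
  intro H. apply (is_RInt_scal _ _ _ k) in H.
  replace (l * k) with (scal k l) by (unfold scal; simpl; unfold mult; simpl; ring).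
  eapply is_RInt_ext; [|exact H]. intros; unfold scal; simpl; unfold mult; simpl; ring.
Qed.

Lemma is_RInt_add (f g : R -> R) (lo hi l1 l2 : R) :
  is_RInt f lo hi l1 -> is_RInt g lo hi l2 -> is_RInt (fun y => f y + g y) lo hi (l1 + l2).
Proof. intros H1 H2. exact (is_RInt_plus _ _ _ _ _ _ H1 H2). Qed.

Lemma is_RInt_split (f : R -> R) (lo mid hi l1 l2 : R) :
  is_RInt f lo mid l1 -> is_RInt f mid hi l2 -> is_RInt f lo hi (l1 + l2).
Proof. intros H1 H2. exact (is_RInt_Chasles _ _ _ _ _ _ H1 H2). Qed.

Lemma is_RInt_reflect (f : R -> R) (c l : R) :
  is_RInt f 0 c l -> is_RInt (fun y => f (c - y)) 0 c l.
Proof.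
  intro H. assert (H1 : is_RInt f (-1 * 0 + c) (-1 * c + c) (opp l)).
  { replace (-1 * c + c) with 0 by ring. replace (-1 * 0 + c) with c by ring.
    exact (is_RInt_swap _ _ _ _ H). }
  apply is_RInt_comp_lin, (is_RInt_scal _ _ _ (-1)) in H1.
  replace l with (scal (-1) (opp l)) by (unfold scal, opp; simpl; unfold mult; simpl; ring).
  eapply is_RInt_ext; [|exact H1]. intros; unfold scal; simpl; unfold mult; simpl.
  replace (-1 * x + c) with (c - x) by ring. ring.
Qed.

Lemma is_RInt_inv (c lo hi : R) : 0 < lo <= hi ->
  is_RInt (fun v => c / v) lo hi (c * ln (hi / lo)).
Proof.
  intro H. rewrite ln_div by lra.
  replace (c * (ln hi - ln lo)) with (c * ln hi - c * ln lo) by ring.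
  apply (is_RInt_primitive (fun v => c * ln v)); [lra| |].
  - intros x Hx. auto_derive; [lra|]. field; lra.
  - intros x Hx. apply (ex_derive_continuous (fun v : R => c / v)). auto_derive. lra.
Qed.

Lemma div_speed (d c v : R) : d / (v * c) = d / (1 * c) / v.
Proof. unfold Rdiv. rewrite !Rinv_mult, Rinv_1. ring. Qed.

Lemma div_speed_lt (p q v : R) : 0 < v -> (p / v < q / v <-> p < q).
Proof.
  intro Hv. unfold Rdiv. split; intro H.
  - apply (Rmult_lt_reg_r (/ v)); [apply Rinv_0_lt_compat|]; assumption.
  - apply Rmult_lt_compat_r; [apply Rinv_0_lt_compat|]; assumption.
Qed.

Lemma ind_right_speed (a x phi v : R) : 0 < v -> ind_right a x phi v = ind_right a x phi 1.
Proof.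
  intro Hv. unfold ind_right, t_right, t_top.
  rewrite (div_speed (a - x)), (div_speed a).
  destruct (Rlt_dec 0 (cos phi)); [|reflexivity].
  destruct (Rlt_dec _ _) as [h|h]; destruct (Rlt_dec _ _) as [h'|h']; try reflexivity;
    exfalso; [apply h' | apply h]; apply (div_speed_lt _ _ v Hv); assumption.
Qed.

Lemma ind_left_speed (a x phi v : R) : 0 < v -> ind_left a x phi v = ind_left a x phi 1.
Proof.
  intro Hv. unfold ind_left, t_left, t_top.
  rewrite (div_speed x), (div_speed a).
  destruct (Rlt_dec (cos phi) 0); [|reflexivity].
  destruct (Rlt_dec _ _) as [h|h]; destruct (Rlt_dec _ _) as [h'|h']; try reflexivity;
    exfalso; [apply h' | apply h]; apply (div_speed_lt _ _ v Hv); assumption.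
Qed.

Lemma exit_time_speed (a x phi v : R) : 0 < v ->
  exit_time a x phi v = exit_time a x phi 1 / v.
Proof.
  intro Hv. unfold exit_time, ind_top.
  rewrite ind_right_speed, ind_left_speed by assumption.
  unfold t_right, t_left, t_top. rewrite (div_speed (a - x)), (div_speed x), (div_speed a).
  unfold Rdiv. ring.
Qed.

(* Fubini-free evaluation of an expectation whose integrand is q x phi / v:
   the speed integral contributes ln (Vmax / Vmin), then the angle and the
   entry point are integrated in turn. *)
Lemma expectation_inverse_speed (a Vmin Vmax : R) (g : R -> R -> R -> R)
  (q : R -> R -> R) (G : R -> R) (J : R) :
  0 < Vmin -> Vmin < Vmax ->
  (forall x phi v, 0 < v -> g x phi v = q x phi / v) ->
  (forall x, 0 <= x <= a -> is_RInt (q x) 0 PI (G x)) -> is_RInt G 0 a J ->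
  expectation a Vmin Vmax g (J * ln (Vmax / Vmin) / (a * PI * (Vmax - Vmin))).
Proof.
  intros Hmin Hlt Hg Hq HG. exists (J * ln (Vmax / Vmin)). split; [|reflexivity].
  exists (fun x => G x * ln (Vmax / Vmin)), (fun x phi => q x phi * ln (Vmax / Vmin)).
  split; [|split].
  - intros x _ phi _. apply RInt_val_of_is_RInt.
    eapply is_RInt_ext; [|apply is_RInt_inv; lra].
    rewrite Rmin_left, Rmax_right by lra. intros v Hv. rewrite Hg by lra. reflexivity.
  - intros x Hx. apply RInt_val_of_is_RInt, is_RInt_mult_const, Hq, Hx.
  - apply RInt_val_of_is_RInt, is_RInt_mult_const, HG.
Qed.

Lemma expectation_add (a Vmin Vmax : R) (g g1 g2 : R -> R -> R -> R) (l1 l2 : R) :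
  (forall x phi v, g x phi v = g1 x phi v + g2 x phi v) ->
  expectation a Vmin Vmax g1 l1 -> expectation a Vmin Vmax g2 l2 ->
  expectation a Vmin Vmax g (l1 + l2).
Proof.
  intros Hg [I1 [[G1 [H1 [Hin1 [Hmid1 Hout1]]]] ->]] [I2 [[G2 [H2 [Hin2 [Hmid2 Hout2]]]] ->]].
  exists (I1 + I2). split; [|unfold Rdiv; ring].
  exists (fun x => G1 x + G2 x), (fun x phi => H1 x phi + H2 x phi).
  split; [|split].
  - intros x Hx phi Hphi. apply RInt_val_of_is_RInt.
    apply (is_RInt_ext (fun v => g1 x phi v + g2 x phi v)); [intros; symmetry; apply Hg|].
    apply is_RInt_add; apply is_RInt_of_RInt_val; auto.
  - intros x Hx. apply RInt_val_of_is_RInt.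
    apply is_RInt_add; apply is_RInt_of_RInt_val; auto.
  - apply RInt_val_of_is_RInt. apply is_RInt_add; apply is_RInt_of_RInt_val; auto.
Qed.

(* Seen from the entry point (x, 0), the top-right
   corner (a, a) lies at horizontal offset p = a - x, at distance
   [corner_dist a p] and in direction [corner_angle a p]; the node exits on
   the right iff it moves below that direction. *)

Definition corner_dist (a p : R) : R := sqrt (a ^ 2 + p ^ 2).
Definition corner_angle (a p : R) : R := acos (p / corner_dist a p).

Lemma corner_dist_sq (a p : R) : corner_dist a p * corner_dist a p = a ^ 2 + p ^ 2.
Proof. unfold corner_dist. apply sqrt_sqrt. nra. Qed.

Lemma corner_dist_pos (a p : R) : 0 < a -> 0 < corner_dist a p.
Proof. intro. unfold corner_dist. apply sqrt_lt_R0. nra. Qed.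

Lemma corner_dist_gt (a p : R) : 0 < a -> Rabs p < corner_dist a p.
Proof.
  intro Ha. pose proof (corner_dist_pos a p Ha). pose proof (corner_dist_sq a p).
  apply Rabs_def1; nra.
Qed.

Lemma corner_angle_spec (a p : R) : 0 < a -> 0 <= p ->
  0 < corner_angle a p <= PI / 2 /\
  cos (corner_angle a p) = p / corner_dist a p /\
  sin (corner_angle a p) = a / corner_dist a p.
Proof.
  intros Ha Hp. pose proof (corner_dist_pos a p Ha) as Hr. pose proof (corner_dist_sq a p) as Hs.
  pose proof (corner_dist_gt a p Ha) as Hpr. rewrite Rabs_right in Hpr by lra.
  set (r := corner_dist a p) in *. set (t := corner_angle a p).
  assert (Hc0 : 0 <= p / r <= 1).
  { split; [apply Rdiv_le_0_compat; lra|]. apply Rmult_le_reg_r with r; [lra|].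
    field_simplify; lra. }
  assert (Hc : cos t = p / r) by (apply cos_acos; lra).
  assert (Hsin : sin t = a / r).
  { unfold t, corner_angle. fold r. rewrite sin_acos by lra.
    replace (1 - (p / r)²) with ((a / r)²)
      by (unfold Rsqr; field_simplify; try lra; f_equal; nra).
    apply sqrt_Rsqr, Rdiv_le_0_compat; lra. }
  assert (Hb : 0 <= t <= PI) by apply acos_bound.
  assert (Ha_r : 0 < a / r) by (apply Rdiv_lt_0_compat; lra).
  repeat split; try assumption.
  - destruct (Rle_lt_or_eq_dec 0 t (proj1 Hb)) as [h|E]; [exact h|].
    rewrite <- E, sin_0 in Hsin. lra.
  - destruct (Rle_dec t (PI / 2)) as [h|h]; [assumption|].
    pose proof PI_RGT_0. assert (cos t < 0) by (apply cos_lt_0; lra). lra.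
Qed.

(* The sign of sin (corner_angle - phi) decides between the two sides. *)
Lemma corner_sine (a p phi : R) : 0 < a -> 0 <= p ->
  a * cos phi - p * sin phi = corner_dist a p * sin (corner_angle a p - phi).
Proof.
  intros Ha Hp. destruct (corner_angle_spec a p Ha Hp) as [_ [Hc Hs]].
  pose proof (corner_dist_pos a p Ha). rewrite sin_minus, Hc, Hs. field. lra.
Qed.

Lemma div_lt_cross (p q c s : R) : 0 < c -> 0 < s -> (p / c < q / s <-> p * s < q * c).
Proof.
  intros Hc Hs. split; intro H.
  - apply Rmult_lt_compat_r with (r := c * s) in H; [|nra].
    replace (p / c * (c * s)) with (p * s) in H by (field; lra).
    replace (q / s * (c * s)) with (q * c) in H by (field; lra). exact H.
  - apply Rmult_lt_reg_r with (c * s); [nra|].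
    replace (p / c * (c * s)) with (p * s) by (field; lra).
    replace (q / s * (c * s)) with (q * c) by (field; lra). exact H.
Qed.

Lemma ind_right_below_corner (a x phi : R) : 0 < a -> x <= a ->
  0 < phi < corner_angle a (a - x) -> ind_right a x phi 1 = 1.
Proof.
  intros Ha Hx Hphi. destruct (corner_angle_spec a (a - x) Ha ltac:(lra)) as [Ht _].
  pose proof PI_RGT_0. pose proof (corner_sine a (a - x) phi Ha ltac:(lra)).
  pose proof (corner_dist_pos a (a - x) Ha).
  assert (Hc : 0 < cos phi) by (apply cos_gt_0; lra).
  assert (Hs : 0 < sin phi) by (apply sin_gt_0; lra).
  assert (0 < sin (corner_angle a (a - x) - phi)) by (apply sin_gt_0; lra).
  unfold ind_right, t_right, t_top. rewrite !Rmult_1_l.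
  destruct (Rlt_dec 0 (cos phi)) as [_|]; [|lra].
  destruct (Rlt_dec _ _) as [_|h]; [reflexivity|]. exfalso. apply h.
  apply div_lt_cross; [assumption|assumption|nra].
Qed.

Lemma ind_right_above_corner (a x phi : R) : 0 < a -> x <= a ->
  corner_angle a (a - x) < phi < PI -> ind_right a x phi 1 = 0.
Proof.
  intros Ha Hx Hphi. destruct (corner_angle_spec a (a - x) Ha ltac:(lra)) as [Ht _].
  pose proof PI_RGT_0. pose proof (corner_sine a (a - x) phi Ha ltac:(lra)).
  pose proof (corner_dist_pos a (a - x) Ha).
  assert (Hs : 0 < sin phi) by (apply sin_gt_0; lra).
  assert (sin (corner_angle a (a - x) - phi) < 0) by (apply sin_lt_0_var; lra).
  unfold ind_right, t_right, t_top. rewrite !Rmult_1_l.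
  destruct (Rlt_dec 0 (cos phi)) as [Hc|]; [|reflexivity].
  destruct (Rlt_dec _ _) as [h|]; [|reflexivity]. exfalso.
  apply (div_lt_cross _ _ _ _ Hc Hs) in h. nra.
Qed.

Lemma ind_left_mirror (a x phi v : R) :
  ind_left a x phi v = ind_right a (a - x) (PI - phi) v.
Proof.
  unfold ind_left, ind_right, t_left, t_right, t_top.
  rewrite Rtrigo_facts.cos_pi_minus, sin_PI_x. replace (a - (a - x)) with x by ring.
  destruct (Rlt_dec (cos phi) 0); destruct (Rlt_dec 0 (- cos phi)); lra.
Qed.

Lemma ind_right_mirror (a x phi v : R) :
  ind_right a x phi v = ind_left a (a - x) (PI - phi) v.
Proof.
  rewrite ind_left_mirror.
  now replace (a - (a - x)) with x by ring; replace (PI - (PI - phi)) with phi by ring.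
Qed.

Lemma exit_time_mirror (a x phi v : R) :
  exit_time a x phi v = exit_time a (a - x) (PI - phi) v.
Proof.
  unfold exit_time, ind_top. rewrite ind_left_mirror, (ind_right_mirror a x).
  unfold t_left, t_right, t_top. rewrite Rtrigo_facts.cos_pi_minus, sin_PI_x, Ropp_involutive.
  replace (a - (a - x)) with x by ring. ring.
Qed.

Lemma ind_left_below_corner (a x phi : R) : 0 < a -> 0 <= x ->
  0 < phi < PI - corner_angle a x -> ind_left a x phi 1 = 0.
Proof.
  intros Ha Hx Hphi. rewrite ind_left_mirror. apply ind_right_above_corner; [lra|lra|].
  replace (a - (a - x)) with x by ring. pose proof PI_RGT_0. lra.
Qed.

Lemma ind_left_above_corner (a x phi : R) : 0 < a -> 0 <= x ->
  PI - corner_angle a x < phi < PI -> ind_left a x phi 1 = 1.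
Proof.
  intros Ha Hx Hphi. rewrite ind_left_mirror. apply ind_right_below_corner; [lra|lra|].
  replace (a - (a - x)) with x by ring. lra.
Qed.

Definition exit_right (a x phi : R) : R := exit_time a x phi 1 * ind_right a x phi 1.
Definition exit_left (a x phi : R) : R := exit_time a x phi 1 * ind_left a x phi 1.
Definition exit_top (a x phi : R) : R := exit_time a x phi 1 * ind_top a x phi 1.

Definition adj_kernel (a u : R) : R := u * ln ((corner_dist a u + a) / u).
Definition opp_kernel (a t : R) : R := ln ((corner_dist a t + t) / a).

(* Values of the half-angle tangent (1 - cos t) / sin t at the two corner
   directions, in terms of [opp_kernel]. *)
Lemma opp_kernel_half_angle (a p : R) : 0 < a ->
  ln ((1 + p / corner_dist a p) / (a / corner_dist a p)) = opp_kernel a p /\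
  ln ((1 - p / corner_dist a p) / (a / corner_dist a p)) = - opp_kernel a p.
Proof.
  intro Ha. pose proof (corner_dist_pos a p Ha) as Hr. pose proof (corner_dist_sq a p) as Hs.
  pose proof (corner_dist_gt a p Ha) as Hp. apply Rabs_def2 in Hp.
  unfold opp_kernel. set (r := corner_dist a p) in *. split.
  - f_equal. field. lra.
  - rewrite <- ln_Rinv by (apply Rdiv_lt_0_compat; lra). f_equal.
    apply Rmult_eq_reg_r with ((r + p) * a); [|nra].
    field_simplify; lra.
Qed.

Lemma sec_primitive (c y : R) : 0 < cos y -> -1 < sin y ->
  is_derive (fun p => c * ln ((1 + sin p) / cos p)) y (c / cos y).
Proof.
  intros Hc Hs. pose proof (sin2_cos2 y) as E. unfold Rsqr in E. auto_derive.
  - repeat split; try lra. apply Rdiv_lt_0_compat; lra.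
  - field_simplify; try lra.
    replace (c * cos y ^ 2 + c * sin y ^ 2 + c * sin y)
      with (c * (sin y * sin y + cos y * cos y) + c * sin y) by ring.
    rewrite E. field. split; nra.
Qed.
Lemma csc_primitive (c y : R) : 0 < sin y -> cos y < 1 ->
  is_derive (fun p => c * ln ((1 - cos p) / sin p)) y (c / sin y).
Proof.
  intros Hs Hc. pose proof (sin2_cos2 y) as E. unfold Rsqr in E. auto_derive.
  - repeat split; try lra. apply Rdiv_lt_0_compat; lra.
  - field_simplify; try lra.
    replace (c * sin y ^ 2 + c * cos y ^ 2 - c * cos y)
      with (c * (sin y * sin y + cos y * cos y) - c * cos y) by ring.
    rewrite E. field. split; nra.
Qed.

Lemma sec_integral_to_corner (a u : R) : 0 < a -> 0 < u ->
  is_RInt (fun p => u / cos p) 0 (corner_angle a u) (adj_kernel a u).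
Proof.
  intros Ha Hu. destruct (corner_angle_spec a u Ha ltac:(lra)) as [[Ht Ht'] [Hc Hs]].
  pose proof (corner_dist_pos a u Ha) as Hr.
  set (t := corner_angle a u) in *. set (r := corner_dist a u) in *.
  assert (Hc0 : 0 < cos t) by (rewrite Hc; apply Rdiv_lt_0_compat; lra).
  assert (Ht2 : t < PI / 2).
  { destruct (Rle_lt_or_eq_dec _ _ Ht') as [h|E]; [exact h|]. rewrite E, cos_PI2 in Hc0. lra. }
  replace (adj_kernel a u) with (u * ln ((1 + sin t) / cos t) - u * ln ((1 + sin 0) / cos 0)).
  - apply (is_RInt_primitive (fun p => u * ln ((1 + sin p) / cos p))); [lra| |].
    + intros p Hp. apply sec_primitive; [apply cos_gt_0; lra|].
      assert (0 <= sin p) by (apply sin_ge_0; lra). lra.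
    + intros p Hp. apply (ex_derive_continuous (fun p => u / cos p)).
      auto_derive. assert (0 < cos p) by (apply cos_gt_0; lra). lra.
  - rewrite sin_0, cos_0, Hs, Hc. replace ((1 + 0) / 1) with 1 by field. rewrite ln_1.
    unfold adj_kernel. fold r.
    replace ((1 + a / r) / (u / r)) with ((r + a) / u) by (field; lra). ring.
Qed.

Section Angular.
Variables a x : R.
Hypothesis Ha : 0 < a.
Hypothesis Hx : 0 <= x <= a.

Lemma corner_angles_order :
  0 < corner_angle a (a - x) <= PI / 2 /\ PI / 2 <= PI - corner_angle a x < PI.
Proof.
  destruct (corner_angle_spec a (a - x) Ha ltac:(lra)) as [H1 _].
  destruct (corner_angle_spec a x Ha ltac:(lra)) as [H2 _]. lra.
Qed.

Lemma exit_before_right_corner (phi : R) : 0 < phi < corner_angle a (a - x) ->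
  exit_right a x phi = (a - x) / cos phi /\ exit_top a x phi = 0.
Proof.
  intro Hphi. destruct corner_angles_order.
  unfold exit_right, exit_top, exit_time, ind_top.
  rewrite ind_right_below_corner, ind_left_below_corner by lra.
  unfold t_right. rewrite (Rmult_1_l (cos phi)). split; ring.
Qed.

Lemma exit_between_corners (phi : R) :
  corner_angle a (a - x) < phi < PI - corner_angle a x -> exit_top a x phi = a / sin phi.
Proof.
  intro Hphi. destruct corner_angles_order.
  unfold exit_top, exit_time, ind_top.
  rewrite ind_right_above_corner, ind_left_below_corner by lra.
  unfold t_top. rewrite (Rmult_1_l (sin phi)). ring.
Qed.

Lemma exit_after_left_corner (phi : R) : PI - corner_angle a x < phi < PI ->
  exit_top a x phi = 0.
Proof.
  intro Hphi. destruct corner_angles_order.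
  unfold exit_top, ind_top. rewrite ind_right_above_corner, ind_left_above_corner by lra. ring.
Qed.

Lemma angular_right : is_RInt (exit_right a x) 0 PI (adj_kernel a (a - x)).
Proof.
  destruct corner_angles_order as [[Ht1 Ht1'] _].
  rewrite <- (Rplus_0_r (adj_kernel a (a - x))).
  apply (is_RInt_split _ 0 (corner_angle a (a - x)) PI).
  - apply (is_RInt_ext (fun phi => (a - x) / cos phi)).
    { rewrite Rmin_left, Rmax_right by lra. intros phi Hphi.
      symmetry. exact (proj1 (exit_before_right_corner phi Hphi)). }
    destruct (Rle_lt_or_eq_dec x a (proj2 Hx)) as [Hxa|Exa].
    + apply sec_integral_to_corner; lra.
    + (* entering at the corner itself, the right side is never crossed *)
      replace (adj_kernel a (a - x)) with 0 by (unfold adj_kernel; rewrite Exa; ring).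
      apply is_RInt_null; [lra|]. intros phi _. rewrite Exa. unfold Rdiv. ring.
  - apply is_RInt_null; [lra|]. intros phi Hphi.
    unfold exit_right. rewrite ind_right_above_corner; [ring|lra|lra|exact Hphi].
Qed.

Lemma angular_top :
  is_RInt (exit_top a x) 0 PI (a * (opp_kernel a x + opp_kernel a (a - x))).
Proof.
  destruct corner_angles_order as [[Ht1 Ht1'] [Ht2 Ht2']].
  destruct (corner_angle_spec a (a - x) Ha ltac:(lra)) as [_ [Hc1 Hs1]].
  destruct (corner_angle_spec a x Ha ltac:(lra)) as [_ [Hc2 Hs2]].
  rewrite <- (Rplus_0_l (a * _)), <- (Rplus_0_r (a * _)).
  apply (is_RInt_split _ 0 (corner_angle a (a - x)) PI);
    [|apply (is_RInt_split _ _ (PI - corner_angle a x) PI)].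
  - apply is_RInt_null; [lra|]. intros phi Hphi. exact (proj2 (exit_before_right_corner phi Hphi)).
  - apply (is_RInt_ext (fun phi => a / sin phi)).
    { rewrite Rmin_left, Rmax_right by lra. intros phi Hphi.
      symmetry. exact (exit_between_corners phi Hphi). }
    rewrite <- sin_PI_x in Hs2. rewrite <- (Ropp_involutive (cos _)) in Hc2.
    rewrite <- Rtrigo_facts.cos_pi_minus in Hc2.
    set (t1 := corner_angle a (a - x)) in *. set (t2 := PI - corner_angle a x) in *.
    replace (a * (opp_kernel a x + opp_kernel a (a - x)))
      with (a * ln ((1 - cos t2) / sin t2) - a * ln ((1 - cos t1) / sin t1)).
    + apply (is_RInt_primitive (fun p => a * ln ((1 - cos p) / sin p))); [lra| |].
      * intros p Hp. assert (0 < sin p) by (apply sin_gt_0; lra).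
        apply csc_primitive; [assumption|].
        pose proof (sin2_cos2 p) as E. unfold Rsqr in E. nra.
      * intros p Hp. apply (ex_derive_continuous (fun p => a / sin p)).
        auto_derive. assert (0 < sin p) by (apply sin_gt_0; lra). lra.
    + rewrite Hc1, Hs1, Hs2. replace (1 - cos t2) with (1 + x / corner_dist a x) by lra.
      destruct (opp_kernel_half_angle a x Ha) as [-> _].
      destruct (opp_kernel_half_angle a (a - x) Ha) as [_ ->]. ring.
  - apply is_RInt_null; [lra|]. exact exit_after_left_corner.
Qed.

End Angular.

Lemma angular_left (a x : R) : 0 < a -> 0 <= x <= a ->
  is_RInt (exit_left a x) 0 PI (adj_kernel a x).
Proof.
  intros Ha Hx. pose proof (angular_right a (a - x) Ha ltac:(lra)) as H.
  replace (a - (a - x)) with x in H by ring.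
  apply (is_RInt_ext (fun phi => exit_right a (a - x) (PI - phi))).
  - intros phi _. symmetry. unfold exit_left, exit_right.
    now rewrite exit_time_mirror, ind_left_mirror.
  - exact (is_RInt_reflect _ _ _ H).
Qed.

(* Two facts of real analysis used at the singular end point u = 0 of the
   adjacent kernel: a squeeze criterion for continuity, and derivatives
   computed from a continuous difference quotient. *)

Lemma continuous_of_vanishing_bound (f g : R -> R) (x d : R) : 0 < d ->
  (forall u, Rabs (u - x) < d -> Rabs (f u - f x) <= g u) ->
  continuous g x -> g x = 0 -> continuous f x.
Proof.
  intros Hd Hb Hg Hg0. apply continuity_pt_filterlim. apply continuity_pt_filterlim in Hg.
  intros eps Heps. destruct (Hg eps Heps) as [d' [Hd' Hg']].
  exists (Rmin d d'). split; [apply Rmin_glb_lt; lra|].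
  intros u [Hux Hu]. simpl in *. unfold R_dist in *.
  pose proof (Rmin_l d d'). pose proof (Rmin_r d d').
  specialize (Hb u ltac:(lra)).
  assert (Hgu : Rabs (g u - g x) < eps) by (apply Hg'; split; [exact Hux | lra]).
  rewrite Hg0, Rminus_0_r in Hgu. apply Rabs_def2 in Hgu. lra.
Qed.

Lemma is_derive_of_slope (F s : R -> R) (x : R) :
  (forall h, h <> 0 -> (F (x + h) - F x) / h = s h) -> continuous s 0 ->
  is_derive F x (s 0).
Proof.
  intros Hslope Hs. apply is_derive_Reals. apply continuity_pt_filterlim in Hs.
  intros eps Heps. destruct (Hs eps Heps) as [d [Hd Hs']].
  exists (mkposreal d Hd). intros h Hh0 Hh. simpl in Hh. rewrite Hslope by assumption.
  apply (Hs' h). split; [split; [exact I | auto] |]. simpl. unfold R_dist. now rewrite Rminus_0_r.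
Qed.

(* Elementary bounds on the logarithm, giving u ln (c / u) = O(sqrt u). *)
Lemma ln_le_pred (z : R) : 0 < z -> ln z <= z - 1.
Proof. intro Hz. pose proof (exp_ineq1_le (ln z)) as H. rewrite exp_ln in H by exact Hz. lra. Qed.

Lemma ln_le_2sqrt (y : R) : 0 < y -> ln y <= 2 * sqrt y.
Proof.
  intro Hy. pose proof (sqrt_lt_R0 y Hy) as Hs.
  rewrite <- (sqrt_sqrt y) at 1 by lra. rewrite ln_mult by lra.
  pose proof (ln_le_pred (sqrt y) Hs). lra.
Qed.

(* Stdlib's [ln] vanishes on nonpositive arguments. *)
Lemma ln_nonpos (y : R) : y <= 0 -> ln y = 0.
Proof. intro H. unfold ln. destruct (Rlt_dec 0 y); [exfalso; lra | reflexivity]. Qed.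

Lemma corner_dist_0 (a : R) : 0 < a -> corner_dist a 0 = a.
Proof.
  intro. unfold corner_dist. replace (a ^ 2 + 0 ^ 2) with (a * a) by ring. apply sqrt_square. lra.
Qed.

Lemma corner_dist_diag (a : R) : 0 < a -> corner_dist a a = a * sqrt 2.
Proof.
  intro Ha. unfold corner_dist. replace (a ^ 2 + a ^ 2) with ((a * a) * 2) by ring.
  rewrite sqrt_mult, sqrt_square; nra.
Qed.

Definition adj_primitive (a u : R) : R :=
  u ^ 2 / 2 * ln ((corner_dist a u + a) / u) + a * corner_dist a u / 2.

(* The adjacent kernel is O(sqrt u) near 0 (and vanishes for u <= 0). *)
Lemma adj_kernel_bound (a u : R) : 0 < a -> Rabs u <= a ->
  Rabs (adj_kernel a u) <= 2 * sqrt (3 * a * Rabs u).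
Proof.
  intros Ha Hu. pose proof (corner_dist_pos a u Ha). pose proof (corner_dist_sq a u).
  assert (Hs0 : 0 <= sqrt (3 * a * Rabs u)) by apply sqrt_pos.
  unfold adj_kernel. destruct (Rle_lt_dec u 0) as [Hn|Hp].
  - rewrite ln_nonpos; [rewrite Rmult_0_r, Rabs_R0; lra|].
    destruct (Req_dec u 0) as [->|]; [unfold Rdiv; rewrite Rinv_0; lra|].
    apply Rlt_le, Rdiv_pos_neg; lra.
  - rewrite (Rabs_right u) in Hu |- * by lra.
    assert (Hr : corner_dist a u <= 2 * a) by nra.
    assert (Hq : 1 <= (corner_dist a u + a) / u <= 3 * a / u).
    { split; apply Rmult_le_reg_r with u; try lra; field_simplify; lra. }
    assert (Hl : 0 <= ln ((corner_dist a u + a) / u)) by (rewrite <- ln_1; apply ln_le; lra).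
    rewrite Rabs_right by (apply Rle_ge, Rmult_le_pos; lra).
    assert (Hsq : u * sqrt (3 * a / u) = sqrt (3 * a * u)).
    { replace (3 * a * u) with ((u * u) * (3 * a / u)) by (field; lra).
      assert (0 <= 3 * a / u) by (apply Rdiv_le_0_compat; lra).
      rewrite sqrt_mult, sqrt_square; nra. }
    assert (ln ((corner_dist a u + a) / u) <= 2 * sqrt (3 * a / u)).
    { apply Rle_trans with (ln (3 * a / u)); [apply ln_le; lra|].
      apply ln_le_2sqrt, Rdiv_lt_0_compat; lra. }
    nra.
Qed.

Lemma adj_kernel_continuous_0 (a : R) : 0 < a -> continuous (adj_kernel a) 0.
Proof.
  intro Ha. apply (continuous_of_vanishing_bound _ (fun u => 2 * sqrt (3 * a * Rabs u)) 0 a Ha).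
  - intros u Hu. rewrite Rminus_0_r in Hu.
    replace (adj_kernel a 0) with 0 by (unfold adj_kernel; ring). rewrite Rminus_0_r.
    apply adj_kernel_bound; lra.
  - apply (continuous_scal_r 2 (fun u => sqrt (3 * a * Rabs u))).
    apply continuous_sqrt_comp. exact (continuous_scal_r (3 * a) Rabs 0 (continuous_Rabs 0)).
  - rewrite Rabs_R0, Rmult_0_r, sqrt_0. ring.
Qed.

Lemma adj_kernel_continuous (a u : R) : 0 < a -> 0 < u -> continuous (adj_kernel a) u.
Proof.
  intros Ha Hu. apply (ex_derive_continuous (adj_kernel a)). unfold adj_kernel, corner_dist.
  auto_derive. pose proof (sqrt_pos (a * (a * 1) + u * (u * 1))).
  repeat split; try nra. apply Rdiv_lt_0_compat; lra.
Qed.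

Lemma adj_primitive_derive (a u : R) : 0 < a -> 0 < u ->
  is_derive (adj_primitive a) u (adj_kernel a u).
Proof.
  intros Ha Hu. unfold adj_primitive, adj_kernel, corner_dist. auto_derive.
  - pose proof (sqrt_pos (a * (a * 1) + u * (u * 1))).
    repeat split; try nra. apply Rdiv_lt_0_compat; lra.
  - replace (a ^ 2 + u ^ 2) with (a * (a * 1) + u * (u * 1)) by ring.
    assert (Hr : 0 < sqrt (a * (a * 1) + u * (u * 1))) by (apply sqrt_lt_R0; nra).
    assert (Hs : sqrt (a * (a * 1) + u * (u * 1)) * sqrt (a * (a * 1) + u * (u * 1))
                 = a * (a * 1) + u * (u * 1)) by (apply sqrt_sqrt; nra).
    set (r := sqrt (a * (a * 1) + u * (u * 1))) in *.
    (* keep the logarithm opaque, so that field_simplify does not rewrite it *)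
    unfold Rdiv. set (L := ln ((r + a) * / u)).
    field_simplify; try lra. replace (r ^ 2) with (a ^ 2 + u ^ 2) by (simpl; lra). field. nra.
Qed.

Lemma adj_primitive_derive_0 (a : R) : 0 < a ->
  is_derive (adj_primitive a) 0 (adj_kernel a 0).
Proof.
  intro Ha.
  set (s := fun h => adj_kernel a h / 2 + a * h / (2 * (corner_dist a h + a))).
  replace (adj_kernel a 0) with (s 0)
    by (unfold s, adj_kernel; rewrite corner_dist_0 by lra; field; lra).
  apply is_derive_of_slope.
  - intros h Hh. unfold s, adj_primitive, adj_kernel. rewrite Rplus_0_l, corner_dist_0 by lra.
    pose proof (corner_dist_pos a h Ha). pose proof (corner_dist_sq a h).
    assert (E : corner_dist a h - a = h * h / (corner_dist a h + a)).
    { apply Rmult_eq_reg_r with (corner_dist a h + a); [|lra]. field_simplify; nra. }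
    replace (a * corner_dist a h / 2) with (a * a / 2 + a * (corner_dist a h - a) / 2) by field.
    rewrite E. field. lra.
  - assert (H1 : continuous (fun h => adj_kernel a h / 2) 0)
      by exact (continuous_scal_l (adj_kernel a) (/ 2) 0 (adj_kernel_continuous_0 a Ha)).
    assert (H2 : continuous (fun h => a * h / (2 * (corner_dist a h + a))) 0).
    { apply (ex_derive_continuous (fun h => a * h / (2 * (corner_dist a h + a)))).
      unfold corner_dist. auto_derive. pose proof (sqrt_pos (a * (a * 1) + 0 * (0 * 1))). nra. }
    exact (continuous_plus _ _ 0 H1 H2).
Qed.

Lemma position_adj (a : R) : 0 < a ->
  is_RInt (adj_kernel a) 0 a (a ^ 2 / 2 * (ln (sqrt 2 + 1) + (sqrt 2 - 1))).
Proof.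
  intro Ha. replace (a ^ 2 / 2 * (ln (sqrt 2 + 1) + (sqrt 2 - 1)))
    with (adj_primitive a a - adj_primitive a 0).
  - apply is_RInt_primitive; [lra| |]; intros u Hu;
      destruct (Rle_lt_or_eq_dec 0 u (proj1 Hu)) as [Hpos|<-].
    + apply adj_primitive_derive; assumption.
    + apply adj_primitive_derive_0; assumption.
    + apply adj_kernel_continuous; assumption.
    + apply adj_kernel_continuous_0; assumption.
  - unfold adj_primitive. rewrite corner_dist_0, corner_dist_diag by assumption.
    replace ((a * sqrt 2 + a) / a) with (sqrt 2 + 1) by (field; lra).
    replace (0 ^ 2 / 2 * ln ((a + a) / 0)) with 0 by (simpl; field). field.
Qed.

(* Integration over the entry point, opposite side: the kernel
   ln((r + t)/a) = arsinh(t/a) has the primitive t arsinh(t/a) - r. *)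

Definition opp_primitive (a t : R) : R := t * opp_kernel a t - corner_dist a t.

Lemma opp_primitive_derive (a t : R) : 0 < a -> is_derive (opp_primitive a) t (opp_kernel a t).
Proof.
  intro Ha. pose proof (corner_dist_gt a t Ha) as Hgt. apply Rabs_def2 in Hgt.
  pose proof (corner_dist_pos a t Ha) as Hr.
  unfold opp_primitive, opp_kernel, corner_dist in *. auto_derive.
  - replace (a * (a * 1) + t * (t * 1)) with (a ^ 2 + t ^ 2) by ring.
    repeat split; try nra. apply Rdiv_lt_0_compat; lra.
  - replace (a * (a * 1) + t * (t * 1)) with (a ^ 2 + t ^ 2) by ring.
    set (r := sqrt (a ^ 2 + t ^ 2)) in *.
    unfold Rdiv. set (L := ln ((r + t) * / a)). field. lra.
Qed.

Lemma opp_kernel_continuous (a t : R) : 0 < a -> continuous (opp_kernel a) t.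
Proof.
  intro Ha. pose proof (corner_dist_gt a t Ha) as Hgt. apply Rabs_def2 in Hgt.
  pose proof (corner_dist_pos a t Ha) as Hr.
  apply (ex_derive_continuous (opp_kernel a)). unfold opp_kernel, corner_dist in *. auto_derive.
  replace (a * (a * 1) + t * (t * 1)) with (a ^ 2 + t ^ 2) by ring.
  repeat split; try nra. apply Rdiv_lt_0_compat; lra.
Qed.

Lemma position_opp (a : R) : 0 < a ->
  is_RInt (opp_kernel a) 0 a (a * (ln (sqrt 2 + 1) + (1 - sqrt 2))).
Proof.
  intro Ha. replace (a * (ln (sqrt 2 + 1) + (1 - sqrt 2)))
    with (opp_primitive a a - opp_primitive a 0).
  - apply is_RInt_primitive; [lra| |]; intros t _.
    + apply opp_primitive_derive; assumption.
    + apply opp_kernel_continuous; assumption.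
  - unfold opp_primitive, opp_kernel. rewrite corner_dist_0, corner_dist_diag by assumption.
    replace ((a * sqrt 2 + a) / a) with (sqrt 2 + 1) by (field; lra). ring.
Qed.

Lemma position_top (a : R) : 0 < a ->
  is_RInt (fun x => a * (opp_kernel a x + opp_kernel a (a - x))) 0 a
    (2 * a ^ 2 * (ln (sqrt 2 + 1) + (1 - sqrt 2))).
Proof.
  intro Ha. pose proof (position_opp a Ha) as H.
  apply (is_RInt_ext (fun x => (opp_kernel a x + opp_kernel a (a - x)) * a));
    [intros x _; apply Rmult_comm|].
  replace (2 * a ^ 2 * (ln (sqrt 2 + 1) + (1 - sqrt 2)))
    with ((a * (ln (sqrt 2 + 1) + (1 - sqrt 2)) + a * (ln (sqrt 2 + 1) + (1 - sqrt 2))) * a)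
    by ring.
  apply is_RInt_mult_const, is_RInt_add; [exact H | exact (is_RInt_reflect _ _ _ H)].
Qed.

Lemma exit_weights_speed (a x phi v : R) : 0 < v ->
  exit_time a x phi v * ind_right a x phi v = exit_right a x phi / v /\
  exit_time a x phi v * ind_left a x phi v = exit_left a x phi / v /\
  exit_time a x phi v * ind_top a x phi v = exit_top a x phi / v.
Proof.
  intro Hv. unfold exit_right, exit_left, exit_top, ind_top.
  rewrite exit_time_speed, ind_right_speed, ind_left_speed by assumption.
  unfold Rdiv. repeat split; ring.
Qed.

Theorem lemma3 (a Vmin Vmax : R) (ha : 0 < a) (hmin : 0 < Vmin)
  (hlt : Vmin < Vmax) :
  let K := 1 / (a * PI * (Vmax - Vmin)) in
  let Iaw := K * a ^ 2 / 2 * ln (Vmax / Vmin)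
             * (ln (sqrt 2 + 1) + (sqrt 2 - 1)) in
  let Iow := 2 * K * a ^ 2 * ln (Vmax / Vmin)
             * (ln (sqrt 2 + 1) + (1 - sqrt 2)) in
  expectation a Vmin Vmax
    (fun x phi v => exit_time a x phi v * ind_right a x phi v) Iaw /\
  expectation a Vmin Vmax
    (fun x phi v => exit_time a x phi v * ind_left a x phi v) Iaw /\
  expectation a Vmin Vmax
    (fun x phi v => exit_time a x phi v * ind_top a x phi v) Iow /\
  expectation a Vmin Vmax (fun x phi v => exit_time a x phi v)
    (2 * Iaw + Iow).
Proof.
  intros K Iaw Iow. pose proof PI_RGT_0.
  assert (Hright : expectation a Vmin Vmax
                     (fun x phi v => exit_time a x phi v * ind_right a x phi v) Iaw).
  { replace Iaw with (a ^ 2 / 2 * (ln (sqrt 2 + 1) + (sqrt 2 - 1)) * ln (Vmax / Vmin)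
                      / (a * PI * (Vmax - Vmin))) by (unfold Iaw, K; field; repeat split; lra).
    apply (expectation_inverse_speed _ _ _ _ (exit_right a) (fun x => adj_kernel a (a - x)));
      try assumption.
    - intros x phi v Hv. exact (proj1 (exit_weights_speed a x phi v Hv)).
    - intros x Hx. exact (angular_right a x ha Hx).
    - exact (is_RInt_reflect _ _ _ (position_adj a ha)). }
  assert (Hleft : expectation a Vmin Vmax
                    (fun x phi v => exit_time a x phi v * ind_left a x phi v) Iaw).
  { replace Iaw with (a ^ 2 / 2 * (ln (sqrt 2 + 1) + (sqrt 2 - 1)) * ln (Vmax / Vmin)
                      / (a * PI * (Vmax - Vmin))) by (unfold Iaw, K; field; repeat split; lra).
    apply (expectation_inverse_speed _ _ _ _ (exit_left a) (adj_kernel a)); try assumption.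
    - intros x phi v Hv. exact (proj1 (proj2 (exit_weights_speed a x phi v Hv))).
    - intros x Hx. exact (angular_left a x ha Hx).
    - exact (position_adj a ha). }
  assert (Htop : expectation a Vmin Vmax
                   (fun x phi v => exit_time a x phi v * ind_top a x phi v) Iow).
  { replace Iow with (2 * a ^ 2 * (ln (sqrt 2 + 1) + (1 - sqrt 2)) * ln (Vmax / Vmin)
                      / (a * PI * (Vmax - Vmin))) by (unfold Iow, K; field; repeat split; lra).
    apply (expectation_inverse_speed _ _ _ _ (exit_top a)
             (fun x => a * (opp_kernel a x + opp_kernel a (a - x)))); try assumption.
    - intros x phi v Hv. exact (proj2 (proj2 (exit_weights_speed a x phi v Hv))).
    - intros x Hx. exact (angular_top a x ha Hx).
    - exact (position_top a ha). }
  split; [exact Hright | split; [exact Hleft | split; [exact Htop |]]].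
  (* The three exit events partition the outcomes, so the expectations add up. *)
  replace (2 * Iaw + Iow) with (Iaw + Iaw + Iow) by ring.
  apply (expectation_add a Vmin Vmax _
           (fun x phi v => exit_time a x phi v * ind_right a x phi v
                           + exit_time a x phi v * ind_left a x phi v)
           (fun x phi v => exit_time a x phi v * ind_top a x phi v)).
  - intros x phi v. unfold ind_top. ring.
  - exact (expectation_add _ _ _ _ _ _ _ _ (fun _ _ _ => eq_refl) Hright Hleft).
  - exact Htop.
Qed.
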